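(* Let $X$ be a discrete random variable with exactly $K\ge1$ mass points in $[0,1]$ and let $L>K$ be an integer. Then \[ \sum_{k=1}^{2L-2}\bigl(\mathbb E[\tilde T_k(X)]\bigr)^2\ \ge\ \frac{L-K}{4L}. \]
   Context: $\tilde T_k(x)=\cos(k\arccos(2x-1))$, $x\in[0,1]$, is the shifted Chebyshev polynomial of the first kind of degree $k$. *)

From Stdlib Require Import Reals.
Open Scope R_scope.

Definition shiftedCheb (k : nat) (x : R) : R := cos (INR k * acos (2 * x - 1)).

Fixpoint rsum (n : nat) (f : nat -> R) : R :=
  match n with
  | O => 0
  | S m => rsum m f + f m
  end.

Definition expect (K : nat) (x w : nat -> R) (g : R -> R) : R :=
  rsum K (fun i => w i * g (x i)).

From Stdlib Require Import Reals Lra Lia Psatz.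
Open Scope R_scope.

(* Write t_i = arccos(2 x_i - 1), so that c_k := E[T~_k(X)] = sum_i w_i cos(k t_i),
   and fix N = 2L - 1. The double sum S = sum_{j,l<N} c_{|j-l|}^2 is squeezed:
   each lag k occurs at most 2N times, so S <= N (c_0^2 + 2 sum_{k=1}^{N-1} c_k^2);
   on the other hand, the matrix (cos((j-l)t))_{j,l} is u u^T + v v^T with
   u_j = cos(j t), v_j = sin(j t), so expanding the square writes S as
   sum_{i,i'} w_i w_i' <C(t_i), C(t_i')> with nonnegative Frobenius pairings whose
   diagonal entries are at least N^2/2; together with sum_i w_i^2 >= 1/K this gives
   S >= N^2/(2K). Comparing both bounds with c_0 = 1 yields the claim. *)

Lemma rsum_ext n f g :
  (forall i, (i < n)%nat -> f i = g i) -> rsum n f = rsum n g.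
Proof.
  induction n as [|n IH]; intros H; simpl; [reflexivity|].
  rewrite IH by (intros; apply H; lia). rewrite H by lia. reflexivity.
Qed.

Lemma rsum_add n f g : rsum n (fun i => f i + g i) = rsum n f + rsum n g.
Proof. induction n as [|n IH]; simpl; [ring | rewrite IH; ring]. Qed.

Lemma rsum_mull n c f : rsum n (fun i => c * f i) = c * rsum n f.
Proof. induction n as [|n IH]; simpl; [ring | rewrite IH; ring]. Qed.

Lemma rsum_mulr n c f : rsum n (fun i => f i * c) = rsum n f * c.
Proof. induction n as [|n IH]; simpl; [ring | rewrite IH; ring]. Qed.

Lemma rsum_const n c : rsum n (fun _ => c) = INR n * c.
Proof. induction n as [|n IH]; simpl rsum; [simpl; ring | rewrite IH, S_INR; ring]. Qed.

Lemma rsum_exchange n m F :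
  rsum n (fun i => rsum m (fun j => F i j)) = rsum m (fun j => rsum n (fun i => F i j)).
Proof.
  induction n as [|n IH]; simpl.
  - induction m as [|m IHm]; simpl; [reflexivity | rewrite <- IHm; ring].
  - rewrite IH, <- rsum_add. reflexivity.
Qed.

Lemma rsum_le n f g :
  (forall i, (i < n)%nat -> f i <= g i) -> rsum n f <= rsum n g.
Proof.
  induction n as [|n IH]; intros H; simpl; [lra|].
  assert (rsum n f <= rsum n g) by (apply IH; intros; apply H; lia).
  assert (f n <= g n) by (apply H; lia). lra.
Qed.

Lemma rsum_ge0 n f : (forall i, (i < n)%nat -> 0 <= f i) -> 0 <= rsum n f.
Proof.
  intros H. rewrite <- (Rmult_0_r (INR n)), <- rsum_const. apply rsum_le. exact H.
Qed.

Lemma rsum_ge_term n f i :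
  (forall j, (j < n)%nat -> 0 <= f j) -> (i < n)%nat -> f i <= rsum n f.
Proof.
  induction n as [|n IH]; intros H Hi; [lia|]. simpl.
  destruct (Nat.eq_dec i n) as [->|Hne].
  - assert (0 <= rsum n f) by (apply rsum_ge0; intros; apply H; lia). lra.
  - assert (f i <= rsum n f) by (apply IH; [intros; apply H; lia | lia]).
    assert (0 <= f n) by (apply H; lia). lra.
Qed.

Lemma rsum_recl n f : rsum (S n) f = f 0%nat + rsum n (fun k => f (S k)).
Proof.
  induction n as [|n IH]; [simpl; ring|].
  change (rsum (S (S n)) f) with (rsum (S n) f + f (S n)). rewrite IH. simpl. ring.
Qed.

Lemma rsum_rev n g : rsum n (fun j => g (n - j)%nat) = rsum n (fun k => g (S k)).
Proof.
  revert g; induction n as [|n IH]; intros g; [reflexivity|].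
  change (rsum (S n) (fun j => g (S n - j)%nat))
    with (rsum n (fun j => g (S n - j)%nat) + g (S n - n)%nat).
  replace (S n - n)%nat with 1%nat by lia.
  rewrite (rsum_ext n _ (fun j => g (S (n - j)))) by (intros; f_equal; lia).
  rewrite (IH (fun k => g (S k))), rsum_recl. ring.
Qed.

Lemma rsum_sqr n a : (rsum n a) ^ 2 = rsum n (fun i => rsum n (fun j => a i * a j)).
Proof.
  rewrite <- Rsqr_pow2. unfold Rsqr. rewrite <- rsum_mulr.
  apply rsum_ext; intros i _. symmetry. apply rsum_mull.
Qed.

(* Cauchy-Schwarz against the constant vector, via [2 a_i a_j <= a_i^2 + a_j^2]. *)
Lemma rsum_sqr_le n a : (rsum n a) ^ 2 <= INR n * rsum n (fun i => a i ^ 2).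
Proof.
  rewrite rsum_sqr.
  apply Rle_trans with
    (rsum n (fun i => rsum n (fun j => (a i ^ 2 + a j ^ 2) / 2))).
  { apply rsum_le; intros i _; apply rsum_le; intros j _.
    pose proof (pow2_ge_0 (a i - a j)). lra. }
  rewrite (rsum_ext n _ (fun i => INR n * (a i ^ 2 / 2) + rsum n (fun j => a j ^ 2) / 2)).
  - rewrite rsum_add, rsum_const, rsum_mull. unfold Rdiv. rewrite rsum_mulr. lra.
  - intros i _. unfold Rdiv. rewrite (rsum_ext n _ (fun j => a i ^ 2 * / 2 + a j ^ 2 * / 2))
      by (intros; ring).
    rewrite rsum_add, rsum_const, rsum_mulr. ring.
Qed.

Definition dist_nat (j l : nat) : nat := (j - l + (l - j))%nat.

Lemma rsum_toeplitz_le n f :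
  (forall k, 0 <= f k) ->
  rsum n (fun j => rsum n (fun l => f (dist_nat j l))) <= INR n * (2 * rsum n f - f 0%nat).
Proof.
  intros Hf. induction n as [|n IH]; [simpl; lra|].
  assert (Hsplit : rsum (S n) (fun j => rsum (S n) (fun l => f (dist_nat j l))) =
      rsum n (fun j => rsum n (fun l => f (dist_nat j l)))
      + rsum n (fun j => f (dist_nat j n)) + rsum n (fun l => f (dist_nat n l))
      + f (dist_nat n n)).
  { simpl. rewrite rsum_add. ring. }
  assert (Hcol : rsum n (fun j => f (dist_nat j n)) = rsum n (fun k => f (S k))).
  { rewrite <- rsum_rev. apply rsum_ext; intros. unfold dist_nat. f_equal. lia. }
  assert (Hrow : rsum n (fun l => f (dist_nat n l)) = rsum n (fun k => f (S k))).
  { rewrite <- rsum_rev. apply rsum_ext; intros. unfold dist_nat. f_equal. lia. }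
  replace (dist_nat n n) with 0%nat in Hsplit by (unfold dist_nat; lia).
  rewrite Hsplit, Hcol, Hrow, S_INR.
  pose proof (rsum_recl n f) as Hrecl.
  change (rsum (S n) f) with (rsum n f + f n) in Hrecl |- *.
  pose proof (pos_INR n). pose proof (Hf n). nra.
Qed.

Lemma cos_dist_nat j l t :
  cos (INR (dist_nat j l) * t) = cos (INR j * t) * cos (INR l * t) + sin (INR j * t) * sin (INR l * t).
Proof.
  unfold dist_nat. destruct (Nat.le_gt_cases j l) as [H|H].
  - replace (j - l + (l - j))%nat with (l - j)%nat by lia.
    rewrite minus_INR, Rmult_minus_distr_r, cos_minus by lia. ring.
  - replace (j - l + (l - j))%nat with (j - l)%nat by lia.
    rewrite minus_INR, Rmult_minus_distr_r, cos_minus by lia. ring.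
Qed.

(* The Frobenius pairing of the Toeplitz matrices (cos((j-l)t))_{j,l<n} and
   (cos((j-l)t'))_{j,l<n}, each of which is u u^T + v v^T for u_j = cos(j t),
   v_j = sin(j t). *)
Definition cos_toeplitz_pairing (n : nat) (t t' : R) : R :=
  (rsum n (fun j => cos (INR j * t) * cos (INR j * t'))) ^ 2
  + (rsum n (fun j => cos (INR j * t) * sin (INR j * t'))) ^ 2
  + (rsum n (fun j => sin (INR j * t) * cos (INR j * t'))) ^ 2
  + (rsum n (fun j => sin (INR j * t) * sin (INR j * t'))) ^ 2.

Lemma rsum_cos_toeplitz_mul n t t' :
  rsum n (fun j => rsum n (fun l =>
    cos (INR (dist_nat j l) * t) * cos (INR (dist_nat j l) * t')))
  = cos_toeplitz_pairing n t t'.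
Proof.
  unfold cos_toeplitz_pairing. rewrite !rsum_sqr, <- !rsum_add.
  apply rsum_ext; intros j _. rewrite <- !rsum_add.
  apply rsum_ext; intros l _. rewrite !cos_dist_nat. ring.
Qed.

Lemma cos_toeplitz_pairing_ge0 n t t' : 0 <= cos_toeplitz_pairing n t t'.
Proof.
  unfold cos_toeplitz_pairing.
  repeat apply Rplus_le_le_0_compat; apply pow2_ge_0.
Qed.

Lemma cos_toeplitz_pairing_diag n t : INR n ^ 2 <= 2 * cos_toeplitz_pairing n t t.
Proof.
  unfold cos_toeplitz_pairing.
  set (cc := rsum n (fun j => cos (INR j * t) * cos (INR j * t))).
  set (ss := rsum n (fun j => sin (INR j * t) * sin (INR j * t))).
  assert (Hn : cc + ss = INR n).
  { unfold cc, ss. rewrite <- rsum_add, <- (Rmult_1_r (INR n)), <- rsum_const.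
    apply rsum_ext; intros j _. rewrite <- (sin2_cos2 (INR j * t)). unfold Rsqr. ring. }
  rewrite <- Hn.
  pose proof (pow2_ge_0 (rsum n (fun j => cos (INR j * t) * sin (INR j * t)))).
  pose proof (pow2_ge_0 (rsum n (fun j => sin (INR j * t) * cos (INR j * t)))).
  pose proof (pow2_ge_0 (cc - ss)). nra.
Qed.

Lemma rsum_exchange_pairs n m (F : nat -> nat -> nat -> nat -> R) :
  rsum n (fun j => rsum n (fun l => rsum m (fun i => rsum m (fun i' => F j l i i')))) =
  rsum m (fun i => rsum m (fun i' => rsum n (fun j => rsum n (fun l => F j l i i')))).
Proof.
  transitivity (rsum n (fun j => rsum m (fun i => rsum n (fun l => rsum m (fun i' => F j l i i'))))).
  { apply rsum_ext; intros j _. apply rsum_exchange. }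
  rewrite rsum_exchange. apply rsum_ext; intros i _.
  transitivity (rsum n (fun j => rsum m (fun i' => rsum n (fun l => F j l i i')))).
  { apply rsum_ext; intros j _. apply rsum_exchange. }
  apply rsum_exchange.
Qed.

Lemma rsum_cos_toeplitz_mixture K n w t :
  rsum n (fun j => rsum n (fun l => (rsum K (fun i => w i * cos (INR (dist_nat j l) * t i))) ^ 2))
  = rsum K (fun i => rsum K (fun i' => w i * w i' * cos_toeplitz_pairing n (t i) (t i'))).
Proof.
  transitivity (rsum n (fun j => rsum n (fun l => rsum K (fun i => rsum K (fun i' =>
    w i * w i' * (cos (INR (dist_nat j l) * t i) * cos (INR (dist_nat j l) * t i'))))))).
  { apply rsum_ext; intros j _; apply rsum_ext; intros l _. rewrite rsum_sqr.
    apply rsum_ext; intros i _; apply rsum_ext; intros i' _. ring. }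
  rewrite rsum_exchange_pairs.
  apply rsum_ext; intros i _; apply rsum_ext; intros i' _.
  rewrite <- rsum_cos_toeplitz_mul, <- rsum_mull.
  apply rsum_ext; intros j _. rewrite <- rsum_mull. reflexivity.
Qed.

Lemma rsum_cos_toeplitz_mixture_ge K n w t :
  (forall i, (i < K)%nat -> 0 <= w i) -> rsum K w = 1 ->
  INR n ^ 2 <= 2 * INR K *
    rsum n (fun j => rsum n (fun l => (rsum K (fun i => w i * cos (INR (dist_nat j l) * t i))) ^ 2)).
Proof.
  intros Hw Hw1. rewrite rsum_cos_toeplitz_mixture.
  assert (Hdiag : rsum K (fun i => w i ^ 2 * (INR n ^ 2 / 2)) <=
      rsum K (fun i => rsum K (fun i' => w i * w i' * cos_toeplitz_pairing n (t i) (t i')))).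
  { apply rsum_le; intros i Hi.
    apply Rle_trans with (w i * w i * cos_toeplitz_pairing n (t i) (t i)).
    - pose proof (cos_toeplitz_pairing_diag n (t i)). pose proof (Hw i Hi). nra.
    - apply (rsum_ge_term K (fun i' => w i * w i' * cos_toeplitz_pairing n (t i) (t i')));
        [intros i' Hi' | exact Hi].
      repeat apply Rmult_le_pos; auto using cos_toeplitz_pairing_ge0. }
  rewrite rsum_mulr in Hdiag.
  pose proof (rsum_sqr_le K w) as Hcs. rewrite Hw1, pow1 in Hcs.
  pose proof (pow2_ge_0 (INR n)). pose proof (pos_INR K). nra.
Qed.

Lemma tail_lower_bound k l s :
  1 <= k -> k + 1 <= l -> (2 * l - 1) ^ 2 <= 2 * k * ((2 * l - 1) * (2 * s + 1)) ->
  (l - k) / (4 * l) <= s.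
Proof.
  intros Hk Hl Hsq.
  assert (Hlin : 2 * l - 1 <= 2 * k * (2 * s + 1)) by nra.
  apply Rmult_le_reg_l with (4 * l); [lra|].
  replace (4 * l * ((l - k) / (4 * l))) with (l - k) by (field; lra).
  nra.
Qed.

Theorem mainTheorem12 (K L : nat) (x w : nat -> R) :
  (1 <= K)%nat ->
  (K < L)%nat ->
  (forall i, (i < K)%nat -> 0 <= x i <= 1) ->
  (forall i j, (i < K)%nat -> (j < K)%nat -> x i = x j -> i = j) ->
  (forall i, (i < K)%nat -> 0 < w i) ->
  rsum K w = 1 ->
  rsum (2 * L - 2) (fun j => (expect K x w (shiftedCheb (S j))) ^ 2)
    >= (INR L - INR K) / (4 * INR L).
Proof.
  intros HK HL _ _ Hw Hw1.
  set (c2 := fun k => (expect K x w (shiftedCheb k)) ^ 2).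
  change (rsum (2 * L - 2) (fun j => c2 (S j)) >= (INR L - INR K) / (4 * INR L)).
  set (N := (2 * L - 1)%nat).
  assert (Hc0 : c2 0%nat = 1).
  { unfold c2, expect, shiftedCheb. simpl INR.
    rewrite (rsum_ext K _ w) by (intros; rewrite Rmult_0_l, cos_0; ring).
    rewrite Hw1. ring. }
  assert (Htail : rsum N c2 = 1 + rsum (2 * L - 2) (fun j => c2 (S j))).
  { replace N with (S (2 * L - 2)) by (unfold N; lia). rewrite rsum_recl, Hc0. reflexivity. }
  pose proof (rsum_toeplitz_le N c2 ltac:(intros; apply pow2_ge_0)) as Hupper.
  pose proof (rsum_cos_toeplitz_mixture_ge K N w (fun i => acos (2 * x i - 1))
    ltac:(intros i Hi; apply Rlt_le, Hw, Hi) Hw1) as Hlower.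
  change (INR N ^ 2 <= 2 * INR K * rsum N (fun j => rsum N (fun l => c2 (dist_nat j l))))
    in Hlower.
  rewrite Htail, Hc0 in Hupper.
  assert (HN : INR N = 2 * INR L - 1).
  { unfold N. rewrite minus_INR, mult_INR by lia. simpl. ring. }
  rewrite HN in Hupper, Hlower.
  apply Rle_ge, tail_lower_bound.
  - apply (le_INR 1); lia.
  - rewrite <- S_INR. apply le_INR. lia.
  - eapply Rle_trans; [exact Hlower|].
    apply Rmult_le_compat_l; [pose proof (pos_INR K); lra | lra].
Qed.
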